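(* For every state $\rho$ on a finite-dimensional bipartite Hilbert space $\mathcal{H}_A\otimes\mathcal{H}_B$, $$E_{\max}(\rho)=\log\bigl(1+R_g(\rho)\bigr),$$ i.e. the max-relative entropy of entanglement equals the global log robustness of entanglement.
   Context: Logarithms are base 2. $\mathcal{D}$ denotes the set of states and $\mathcal{S}\subset\mathcal{D}$ the set of separable states on $\mathcal{H}_A\otimes\mathcal{H}_B$. For a state $\rho$ and positive operator $\sigma$, $D_{\max}(\rho\|\sigma):=\log\min\{\lambda:\rho\le\lambda\sigma\}$, and $E_{\max}(\rho):=\min_{\sigma\in\mathcal{S}}D_{\max}(\rho\|\sigma)$. The global robustness of entanglement is $R_g(\rho):=\min\{s\ge0:\exists\,\omega\in\mathcal{D}\text{ such that }\tfrac{1}{1+s}\rho+\tfrac{s}{1+s}\omega\in\mathcal{S}\}$. *)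

From HB Require Import structures.
From mathcomp Require Import all_boot all_order all_algebra.
From mathcomp Require Import complex mxtens.
From mathcomp Require Import boolp classical_sets reals constructive_ereal ereal exp.
Set Implicit Arguments. Unset Strict Implicit. Unset Printing Implicit Defensive.
Import Order.TTheory GRing.Theory Num.Theory.
Local Open Scope ring_scope.
Local Open Scope classical_set_scope.

Section QDefs.
Variable R : realType.
Local Notation C := R[i].

Definition log2 (x : R) : R := ln x / ln 2.

Definition rc (x : R) : C := (x%:C)%C.

Definition adjmx m n (A : 'M[C]_(m, n)) : 'M[C]_(n, m) := (map_mx Num.conj A)^T.

Definition hermitian n (A : 'M[C]_n) : Prop := adjmx A = A.

Definition psd n (A : 'M[C]_n) : Prop :=
  hermitian A /\ forall v : 'cV[C]_n, 0 <= (adjmx v *m A *m v) 0 0.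

Definition loewner_le n (A B : 'M[C]_n) : Prop := psd (B - A).

Definition state n (rho : 'M[C]_n) : Prop := psd rho /\ \tr rho = 1.

Definition separable dA dB (sigma : 'M[C]_(dA * dB)) : Prop :=
  exists (k : nat) (p : 'I_k -> R) (a : 'I_k -> 'M[C]_dA) (b : 'I_k -> 'M[C]_dB),
    [/\ forall i, 0 <= p i,
        \sum_(i < k) p i = 1,
        forall i, state (a i),
        forall i, state (b i) &
        sigma = \sum_(i < k) rc (p i) *: (a i *t b i)].

(* D_max(rho || sigma) = log min { lambda : rho <= lambda sigma }
   (+oo if no such lambda exists) *)
Definition Dmax n (rho sigma : 'M[C]_n) : \bar R :=
  ereal_inf [set (log2 l)%:E | l in [set l : R | 0 < l /\ loewner_le rho (rc l *: sigma)]].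

Definition Emax dA dB (rho : 'M[C]_(dA * dB)) : \bar R :=
  ereal_inf [set Dmax rho sigma | sigma in [set sigma | @separable dA dB sigma]].

Definition Rg dA dB (rho : 'M[C]_(dA * dB)) : R :=
  inf [set s : R | 0 <= s /\
        exists omega : 'M[C]_(dA * dB), state omega /\
          @separable dA dB (rc (1 + s)^-1 *: rho + rc (s / (1 + s)) *: omega)].

End QDefs.

From Pilot Require Import Defs.
From HB Require Import structures.
From mathcomp Require Import all_boot all_order all_algebra.
From mathcomp Require Import complex mxtens.
From mathcomp Require Import boolp classical_sets reals constructive_ereal ereal exp.
From mathcomp Require Import sequences.
Import Order.TTheory GRing.Theory Num.Theory.
Local Open Scope ring_scope.

(* If [rho <= l sigma] with [sigma] separable, then [l sigma - rho] is psd of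
   trace [l - 1], so [omega := (l sigma - rho) / (l - 1)] is a state and
   [(rho + (l - 1) omega) / l = sigma] is separable: [s = l - 1] is admissible
   for the robustness.  Conversely an admissible [s] produces the separable
   mixture [sigma] with [rho <= (1 + s) sigma].  Thus the feasible [l] of
   [E_max] are exactly [1 + s] for the admissible [s], and [log2] is
   increasing.  Some [s] is admissible because [rho <= c 1 = c dA dB
   (1/dA (x) 1/dB)] for large [c]. *)

Set Implicit Arguments. Unset Strict Implicit.

Lemma mulr_le_sqr (F : numDomainType) (a b : F) :
  0 <= a -> 0 <= b -> a * b <= a ^+ 2 + b ^+ 2.
Proof.
move=> a0 b0; have [ab|ba] := real_leP (ger0_real a0) (ger0_real b0).
  by rewrite expr2 (le_trans (ler_wpM2r b0 ab)) // lerDr mulr_ge0.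
by rewrite [b ^+ 2]expr2 (le_trans (ler_wpM2l a0 (ltW ba))) // lerDl mulr_ge0.
Qed.

Section Robustness.
Variable R : realType.
Local Notation C := R[i].
Local Open Scope classical_set_scope.

Lemma rc1 : rc 1 = 1 :> C. Proof. by rewrite /rc rmorph1. Qed.
Lemma rc0 : rc 0 = 0 :> C. Proof. by rewrite /rc rmorph0. Qed.
Lemma rcD (x y : R) : rc (x + y) = rc x + rc y. Proof. by rewrite /rc rmorphD. Qed.
Lemma rcB (x y : R) : rc (x - y) = rc x - rc y. Proof. by rewrite /rc rmorphB. Qed.
Lemma rcM (x y : R) : rc (x * y) = rc x * rc y. Proof. by rewrite /rc rmorphM. Qed.
Lemma rcV (x : R) : rc x^-1 = (rc x)^-1. Proof. by rewrite /rc fmorphV. Qed.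
Lemma conj_rc (x : R) : Num.conj (rc x) = rc x. Proof. exact: conjc_real. Qed.
Lemma rc_ge0 (x : R) : (0 <= rc x) = (0 <= x). Proof. exact: ler0c. Qed.

Lemma adjmxD m n (A B : 'M[C]_(m, n)) : adjmx (A + B) = adjmx A + adjmx B.
Proof. by apply/matrixP=> i j; rewrite !mxE rmorphD. Qed.

Lemma adjmxN m n (A : 'M[C]_(m, n)) : adjmx (- A) = - adjmx A.
Proof. by apply/matrixP=> i j; rewrite !mxE rmorphN. Qed.

Lemma adjmxB m n (A B : 'M[C]_(m, n)) : adjmx (A - B) = adjmx A - adjmx B.
Proof. by rewrite adjmxD adjmxN. Qed.

Lemma adjmxZ m n (c : C) (A : 'M[C]_(m, n)) : adjmx (c *: A) = Num.conj c *: adjmx A.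
Proof. by apply/matrixP=> i j; rewrite !mxE rmorphM. Qed.

Lemma adjmx1 n : adjmx (1%:M : 'M[C]_n) = 1%:M.
Proof.
by apply/matrixP=> i j; rewrite !mxE eq_sym; case: (j == i); rewrite ?conjC_nat.
Qed.

Lemma adjmx_delta m n (i : 'I_m) (j : 'I_n) :
  adjmx (delta_mx i j : 'M[C]_(m, n)) = delta_mx j i.
Proof. by apply/matrixP=> k l; rewrite !mxE andbC conjC_nat. Qed.

Lemma hermitian_conj n (M : 'M[C]_n) i j : Defs.hermitian M -> M j i = Num.conj (M i j).
Proof. by move=> hM; rewrite -{1}hM !mxE. Qed.

Definition qform n (A : 'M[C]_n) (v : 'cV[C]_n) : C := (adjmx v *m A *m v) 0 0.

Lemma qformD n (A B : 'M[C]_n) v : qform (A + B) v = qform A v + qform B v.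
Proof. by rewrite /qform mulmxDr mulmxDl mxE. Qed.

Lemma qformN n (A : 'M[C]_n) v : qform (- A) v = - qform A v.
Proof. by rewrite /qform mulmxN mulNmx mxE. Qed.

Lemma qformZ n (c : C) (A : 'M[C]_n) v : qform (c *: A) v = c * qform A v.
Proof. by rewrite /qform -scalemxAr -scalemxAl mxE. Qed.

Lemma qformE n (A : 'M[C]_n) v :
  qform A v = \sum_j \sum_i Num.conj (v i 0) * A i j * v j 0.
Proof.
rewrite /qform mxE; apply: eq_bigr => j _; rewrite mxE mulr_suml.
by apply: eq_bigr => i _; rewrite !mxE.
Qed.

Lemma qform1 n (v : 'cV[C]_n) : qform 1%:M v = \sum_i `|v i 0| ^+ 2.
Proof. by rewrite /qform mulmx1 mxE; apply: eq_bigr => i _; rewrite !mxE normCKC. Qed.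

Lemma mul_delta_mx n (M : 'M[C]_n) i j :
  (delta_mx 0 i : 'rV[C]_n) *m M *m (delta_mx j 0 : 'cV[C]_n) = (M i j)%:M.
Proof.
by apply/matrixP=> a b; rewrite [a]ord1 [b]ord1 -rowE -colE !mxE.
Qed.

Lemma qform_delta n (M : 'M[C]_n) i : qform M (delta_mx i 0) = M i i.
Proof. by rewrite /qform adjmx_delta mul_delta_mx mxE. Qed.

Lemma psdZ n (c : R) (A : 'M[C]_n) : 0 <= c -> psd A -> psd (rc c *: A).
Proof.
move=> c0 [hA qA]; split; first by rewrite /Defs.hermitian adjmxZ conj_rc hA.
by move=> v; rewrite -/(qform _ _) qformZ mulr_ge0 ?rc_ge0 // qA.
Qed.

Lemma psd1 n : psd (1%:M : 'M[C]_n).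
Proof.
split=> [|v]; first exact: adjmx1.
by rewrite -/(qform _ _) qform1 sumr_ge0 // => i _; rewrite exprn_ge0.
Qed.

Lemma psd_diag_ge0 n (M : 'M[C]_n) i : psd M -> 0 <= M i i.
Proof. by case=> _ /(_ (delta_mx i 0)); rewrite -/(qform _ _) qform_delta. Qed.

Lemma psd_mxtrace_ge0 n (M : 'M[C]_n) : psd M -> 0 <= \tr M.
Proof. by move=> pM; apply: sumr_ge0 => i _; apply: psd_diag_ge0. Qed.

Lemma psd_mxtrace_eq0 n (M : 'M[C]_n) : psd M -> \tr M = 0 -> M = 0.
Proof.
move=> pM tr0; have dM0 i : M i i = 0.
  by apply: (psumr_eq0P _ tr0) => // k _; apply: psd_diag_ge0.
case: (pM) => hM qM; apply/matrixP=> i j; rewrite mxE.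
(* test [M] on [e_i - conj (M i j) e_j]: the form is [-2 |M i j|^2] *)
have := qM (delta_mx i 0 - Num.conj (M i j) *: delta_mx j 0).
rewrite adjmxB adjmxZ !adjmx_delta !mulmxBl !mulmxBr -!scalemxAl -!scalemxAr.
rewrite !mul_delta_mx !mxE !eqxx !mulr1n !dM0 (hermitian_conj i j hM) conjCK.
rewrite !mulr0 !subr0 sub0r mulrC -normCK -opprD oppr_ge0 -mulr2n.
rewrite pmulrn_lle0 // => h.
have : `|M i j| ^+ 2 == 0 by rewrite eq_le h exprn_ge0.
by rewrite expf_eq0 /= normr_eq0 => /eqP.
Qed.

Lemma psd_le_scalar n (rho : 'M[C]_n) :
  psd rho -> exists c : R, 0 < c /\ loewner_le rho (rc c *: 1%:M).
Proof.
move=> [hr qr]; pose K := \sum_j \sum_i `|rho i j|.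
have K0 : 0 <= K by rewrite sumr_ge0 // => j _; rewrite sumr_ge0.
have rcK : rc (complex.Re K) = K by rewrite /rc RRe_real // ger0_real.
exists (2 * complex.Re K + 1); split.
  by rewrite ltr_wpDl // mulr_ge0 // -rc_ge0 rcK.
split; first by rewrite /Defs.hermitian adjmxB adjmxZ conj_rc adjmx1 hr.
move=> v; rewrite -/(qform _ _) qformD qformN qformZ qform1 subr_ge0.
set N := \sum_i _.
(* [|conj v_i rho_ij v_j| <= |rho_ij| (|v_i|^2 + |v_j|^2) <= |rho_ij| 2 N] *)
have vN i j : `|v i 0| * `|v j 0| <= 2 * N.
  have le_N k : `|v k 0| ^+ 2 <= N.
    by rewrite /N (bigD1 k) //= lerDl sumr_ge0 // => l _; rewrite exprn_ge0.
  by rewrite (le_trans (mulr_le_sqr _ _)) // mulr2n mulrDl mul1r lerD.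
have := qr v; rewrite -/(qform _ _) => q0; rewrite -(ger0_norm q0) qformE.
apply: (le_trans (ler_norm_sum _ _ _)).
apply: (@le_trans _ _ (\sum_j \sum_i `|rho i j| * (2 * N))).
  apply: ler_sum => j _; apply: (le_trans (ler_norm_sum _ _ _)).
  apply: ler_sum => i _; rewrite !normrM normcJ mulrAC [leRHS]mulrC.
  by rewrite ler_wpM2r.
under eq_bigr do rewrite -mulr_suml.
rewrite -mulr_suml -/K rcD rcM rcK rc1 /rc rmorph_nat [leRHS]mulrDl mul1r.
by rewrite mulrCA -mulrA lerDl sumr_ge0 // => i _; rewrite exprn_ge0.
Qed.

Lemma mxtrace_tens m n (A : 'M[C]_m) (B : 'M[C]_n) : \tr (A *t B) = \tr A * \tr B.
Proof.
rewrite /mxtrace (reindex (@mxtens_index m n)) /=; last first.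
  exists (@mxtens_unindex m n) => x _; [exact: mxtens_indexK | exact: mxtens_unindexK].
rewrite (eq_bigr (fun p => A p.1 p.1 * B p.2 p.2)); last first.
  by move=> [i j] _; rewrite tensmxE.
rewrite -(pair_big xpredT xpredT (fun i j => A i i * B j j)) /= mulr_suml.
by apply: eq_bigr => i _; rewrite mulr_sumr.
Qed.

Lemma tensmx_scalar m n (x y : C) :
  (x%:M : 'M_m) *t (y%:M : 'M_n) = (x * y)%:M.
Proof.
apply/matrixP=> I J.
case: (mxtens_indexP I) => i0 i1; case: (mxtens_indexP J) => j0 j1.
rewrite tensmxE !mxE (inj_eq (can_inj (@mxtens_indexK m n))) xpair_eqE.
by case: (i0 == j0); case: (i1 == j1); rewrite ?mulr1n ?mulr0n ?mulr0 ?mul0r.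
Qed.

Lemma separable_mxtrace dA dB (sigma : 'M[C]_(dA * dB)) :
  separable sigma -> \tr sigma = 1.
Proof.
case=> k [p [a [b [_ p1 sa sb ->]]]]; rewrite raddf_sum /=.
under eq_bigr do rewrite mxtraceZ mxtrace_tens (proj2 (sa _)) (proj2 (sb _)) !mulr1.
by rewrite /rc -rmorph_sum p1 rmorph1.
Qed.

Lemma state_dim_gt0 n (rho : 'M[C]_n) : state rho -> (0 < n)%N.
Proof.
by case: n rho => // rho [_]; rewrite /mxtrace big_ord0 => /eqP; rewrite eq_sym oner_eq0.
Qed.

Lemma state_maximally_mixed m : (0 < m)%N -> state (rc m%:R^-1 *: (1%:M : 'M[C]_m)).
Proof.
move=> m0; split; first by apply: psdZ; [rewrite invr_ge0 ler0n | exact: psd1].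
by rewrite mxtraceZ mxtrace1 rcV /rc rmorph_nat mulVf // pnatr_eq0 -lt0n.
Qed.

Lemma separable_maximally_mixed dA dB : (0 < dA)%N -> (0 < dB)%N ->
  separable (rc (dA * dB)%:R^-1 *: (1%:M : 'M[C]_(dA * dB))).
Proof.
move=> dA0 dB0.
exists 1%N, (fun=> 1), (fun=> rc dA%:R^-1 *: 1%:M), (fun=> rc dB%:R^-1 *: 1%:M).
split=> [_||_|_|]; rewrite ?big_ord1 ?ler01 //; try exact: state_maximally_mixed.
by rewrite rc1 scale1r !scalemx1 tensmx_scalar -rcM natrM invfM.
Qed.

Definition robust_set dA dB (rho : 'M[C]_(dA * dB)) : set R :=
  [set s | 0 <= s /\ exists omega : 'M[C]_(dA * dB), state omega /\
      separable (rc (1 + s)^-1 *: rho + rc (s / (1 + s)) *: omega)].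

Lemma RgE dA dB (rho : 'M[C]_(dA * dB)) : Rg rho = inf (robust_set rho).
Proof. by []. Qed.

Lemma robust_set_loewner_le dA dB (rho sigma : 'M[C]_(dA * dB)) (l : R) :
  state rho -> separable sigma -> loewner_le rho (rc l *: sigma) ->
  robust_set rho (l - 1).
Proof.
move=> st sep; rewrite /loewner_le; set M := _ - rho => le.
have trM : \tr M = rc (l - 1).
  by rewrite raddfB /= mxtraceZ (separable_mxtrace sep) (proj2 st) mulr1 rcB rc1.
have l1 : 1 <= l by rewrite -subr_ge0 -rc_ge0 -trM psd_mxtrace_ge0.
have [l_gt1|] := ltrP 1 l; last first.
  move=> l_le1; have l_eq1 : l = 1 by apply/eqP; rewrite eq_le l_le1.
  have := psd_mxtrace_eq0 le; rewrite trM l_eq1 subrr rc0 => /(_ erefl) /eqP.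
  rewrite /M l_eq1 rc1 scale1r subr_eq0 => /eqP sigma_rho.
  split=> //; exists rho; split=> //.
  by rewrite addr0 invr1 mul0r rc1 rc0 scale1r scale0r addr0 -sigma_rho.
have l1_neq0 : l - 1 != 0 by rewrite subr_eq0 gt_eqF.
split; first by rewrite subr_ge0 ltW.
exists (rc (l - 1)^-1 *: M); split.
  split; first by apply: psdZ => //; rewrite invr_ge0 subr_ge0 ltW.
  by rewrite mxtraceZ trM -rcM mulVf // rc1.
rewrite addrCA subrr addr0 scalerA -rcM mulrAC mulfV // mul1r /M scalerBr scalerA.
by rewrite -rcM mulVf ?gt_eqF ?(lt_trans ltr01) // rc1 scale1r addrC subrK.
Qed.

Lemma loewner_le_robust_set dA dB (rho : 'M[C]_(dA * dB)) (s : R) :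
  robust_set rho s ->
  exists2 sigma, separable sigma & loewner_le rho (rc (1 + s) *: sigma).
Proof.
move=> [s0 [om [[pom _] sep]]]; have s1 : 1 + s != 0 by rewrite gt_eqF ?ltr_wpDr.
exists (rc (1 + s)^-1 *: rho + rc (s / (1 + s)) *: om) => //.
rewrite /loewner_le scalerDr !scalerA -!rcM mulfV // mulrCA mulfV // mulr1.
by rewrite rc1 scale1r addrAC subrr add0r; apply: psdZ.
Qed.

Lemma robust_set_neq0 dA dB (rho : 'M[C]_(dA * dB)) :
  state rho -> robust_set rho !=set0.
Proof.
move=> st; have := state_dim_gt0 st; rewrite muln_gt0 => /andP[dA0 dB0].
have [c [c0 le]] := psd_le_scalar (proj1 st).
have dnz : (dA * dB)%:R != 0 :> R by rewrite pnatr_eq0 -lt0n muln_gt0 dA0 dB0.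
exists (c * (dA * dB)%:R - 1).
apply: (robust_set_loewner_le st (separable_maximally_mixed dA0 dB0)).
by rewrite scalerA -rcM mulfK.
Qed.

Lemma Rg_ge0 dA dB (rho : 'M[C]_(dA * dB)) : state rho -> 0 <= Rg rho.
Proof. by move=> st; apply: lb_le_inf (robust_set_neq0 st) _ => s []. Qed.

Lemma log2_lt (x y : R) : 0 < x -> (log2 x < y) = (x < expR (y * ln 2)).
Proof.
have ln2 : 0 < ln (2 : R) by rewrite ln_gt0 // ltr1n.
by move=> x0; rewrite /log2 ltr_pdivrMr // -{2}[x]lnK ?posrE // ltr_expR.
Qed.

Lemma Emax_le_log2_robustness dA dB (rho : 'M[C]_(dA * dB)) :
  state rho -> (Emax rho <= (log2 (1 + Rg rho))%:E)%E.
Proof.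
move=> st; apply/lee_addgt0Pr => e e0; rewrite -EFinD.
set y := _ + e; have Rg1 : 0 < 1 + Rg rho by rewrite ltr_wpDr ?Rg_ge0.
have : 1 + Rg rho < expR (y * ln 2) by rewrite -log2_lt // ltrDl.
rewrite addrC -ltrBrDr RgE => /inf_lt [|s Ss]; first exact: robust_set_neq0.
rewrite ltrBrDl => s_lt; have [sig sep le] := loewner_le_robust_set Ss.
have s1 : 0 < 1 + s by rewrite ltr_wpDr //; case: Ss.
apply: (@le_trans _ _ (Dmax rho sig)); first by apply: ereal_inf_lbound; exists sig.
apply: (@le_trans _ _ (log2 (1 + s))%:E); first by apply: ereal_inf_lbound; exists (1 + s).
by rewrite lee_fin ltW // log2_lt.
Qed.

Lemma log2_robustness_le_Emax dA dB (rho : 'M[C]_(dA * dB)) :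
  state rho -> ((log2 (1 + Rg rho))%:E <= Emax rho)%E.
Proof.
move=> st; apply: le_ereal_inf_tmp => _ [sig sep <-].
apply: le_ereal_inf_tmp => _ [l [l0 le] <-].
have Rg1 : 0 < 1 + Rg rho by rewrite ltr_wpDr ?Rg_ge0.
rewrite lee_fin leNgt log2_lt // -leNgt.
rewrite /log2 divfK ?gt_eqF ?ln_gt0 ?ltr1n // lnK ?posrE //.
have lb : has_lbound (robust_set rho) by exists 0 => s [].
by have := ge_inf lb (robust_set_loewner_le st sep le); rewrite -RgE lerBrDl addrC.
Qed.

End Robustness.

Unset Implicit Arguments. Set Strict Implicit.

Theorem lemma5 (R : realType) (dA dB : nat) (rho : 'M[R[i]]_(dA * dB)) :
  state rho -> Emax rho = (log2 (1 + Rg rho))%:E.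
Proof.
move=> st; apply/le_anti/andP; split.
- exact: Emax_le_log2_robustness.
- exact: log2_robustness_le_Emax.
Qed.
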